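(* Let $\mu>0$ be a constant and suppose $\mu n$ balls are placed independently and uniformly at random into $n$ bins. Let $x>1$, $k\ge 1$ and $j\in[n]$. Then with probability $1-2^{-\Omega(k)}$, for every interval $I\subseteq[n]$ of bins with $j\in I$, the number of balls in the bins of $I$ is at most $(1+1/x)|I|\mu + xk$.
   Context: $[n]=\{1,\dots,n\}$; an interval is a set of consecutive indices $\{a,a+1,\dots,b\}$. The constant in $\Omega(k)$ does not depend on $x,k,n,j$. *)

From HB Require Import structures.
From mathcomp Require Import all_boot all_order all_algebra.
From mathcomp Require Import reals exp.
Set Implicit Arguments. Unset Strict Implicit. Unset Printing Implicit Defensive.
Import Order.TTheory GRing.Theory Num.Theory.
Local Open Scope ring_scope.

(* Outcomes of throwing m balls into n bins: f i = bin of ball i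
   (bins indexed 0..n-1, i.e. bin t here is bin t+1 of the paper).
   The probability space is uniform on {ffun 'I_m -> 'I_n}. *)

Definition load (m n : nat) (f : {ffun 'I_m -> 'I_n}) (a b : nat) : nat :=
  #|[set i : 'I_m | (a <= f i <= b)%N]|.

Definition all_intervals_ok (R : realType) (m n : nat) (mu x k : R) (j : 'I_n)
    (f : {ffun 'I_m -> 'I_n}) : bool :=
  [forall a : 'I_n, forall b : 'I_n,
     ((a <= j)%N && (j <= b)%N) ==>
     ((load f a b)%:R <= (1 + x^-1) * (b - a + 1)%:R * mu + x * k)].

Definition balls_prob (R : realType) (m n : nat)
    (E : pred {ffun 'I_m -> 'I_n}) : R :=
  #|[set f | E f]|%:R / #|{ffun 'I_m -> 'I_n}|%:R.

From HB Require Import structures.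
From mathcomp Require Import all_boot all_order all_algebra.
From mathcomp Require Import reals exp sequences.
From mathcomp Require Import ring lra zify.
Set Implicit Arguments. Unset Strict Implicit. Unset Printing Implicit Defensive.
Import Order.TTheory GRing.Theory Num.Theory.
Local Open Scope ring_scope.

(* An interval {a, ..., b} containing j splits into the left window
   {a, ..., j} and the right window {j + 1, ..., b}.  On each side the
   windows W_1 ⊂ W_2 ⊂ ... form a chain growing by one bin at a time, so
   the theorem reduces to a maximal inequality: with probability at least
   1 - exp(-e A / 2), no window W_L of a chain receives more than
   (1 + e) L mu + A balls.  We use it with e = 1/x and A = x k / 2 on both
   sides and conclude by a union bound, 2 exp(-k/4) <= 2^(-k / (8 ln 2))
   for k >= 8.

   The maximal inequality comes from the tilted weights
   Z_L(f) = (1 + C/L)^(load of W_L).  Against any event that only sees the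
   balls outside W_{L+1}, Z_L and Z_{L+1} have the same total (a reverse
   martingale identity, proved by a change of variables in the product
   measure).  An overflow of W_L forces Z_L >= exp((1 + e) A / 2) when
   C = A / (2 mu); stopping at the first overflow then bounds the number
   of bad outcomes by (n + C)^m exp(-(1 + e) A / 2) <= n^m exp(-e A / 2). *)

Section ChangeOfVariables.
Variables (R : realType) (m n : nat).
Local Notation outcome := {ffun 'I_m -> 'I_n}.

Lemma prod_indicator_eq (g f : outcome) (pi : 'I_n -> 'I_n) :
  \prod_(i : 'I_m) ((pi (f i) == g i)%:R : R) = ([ffun i => pi (f i)] == g)%:R.
Proof.
have [/ffunP Efg | Nfg] := eqVneq.
  by rewrite big1 // => i _; rewrite -Efg ffunE eqxx.
case: (pickP (fun i => pi (f i) != g i)) => [i Hi | Hall].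
  by rewrite (bigD1 i) //= (negPf Hi) mul0r.
case/eqP: Nfg; apply/ffunP => i; rewrite ffunE; apply/eqP.
by have /negbT := Hall i; rewrite negbK.
Qed.

Lemma sum_prod_weights_fiberwise (pi : 'I_n -> 'I_n) (w1 w2 : 'I_n -> R)
    (F : outcome -> R) :
  (forall z, \sum_y (pi y == z)%:R * w1 y = \sum_y (pi y == z)%:R * w2 y) ->
  (forall f, F f = F [ffun i => pi (f i)]) ->
  \sum_(f : outcome) F f * \prod_(i : 'I_m) w1 (f i) =
  \sum_(f : outcome) F f * \prod_(i : 'I_m) w2 (f i).
Proof.
move=> Hw HF.
have pushforward w : \sum_(f : outcome) F f * \prod_(i : 'I_m) w (f i) =
    \sum_(g : outcome) F g * \prod_(i : 'I_m) \sum_y (pi y == g i)%:R * w y.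
  transitivity (\sum_(f : outcome) \sum_(g : outcome)
      ([ffun i => pi (f i)] == g)%:R * (F g * \prod_(i : 'I_m) w (f i))).
    apply: eq_bigr => f _.
    rewrite (bigD1 [ffun i => pi (f i)]) //= eqxx mul1r -HF [X in _ + X]big1 ?addr0 //.
    by move=> g /negPf Hg; rewrite eq_sym Hg mul0r.
  rewrite exchange_big /=; apply: eq_bigr => g _.
  rewrite bigA_distr_bigA mulr_sumr; apply: eq_bigr => f _.
  rewrite big_split /= prod_indicator_eq; ring.
by rewrite !pushforward; apply: eq_bigr => g _; congr (_ * _); apply: eq_bigr.
Qed.

End ChangeOfVariables.

Lemma card_sum_indicator (T : finType) (P : pred T) : #|P| = (\sum_x (P x : nat))%N.
Proof.
rewrite -sum1_card big_mkcond /=; apply: eq_bigr => x _.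
by rewrite unfold_in; case: (P x).
Qed.

Lemma sum_indicator (R : realType) (T : finType) (P : pred T) :
  \sum_(f : T) ((P f)%:R : R) = #|[set f | P f]|%:R.
Proof. by rewrite -natr_sum cardsE card_sum_indicator. Qed.

Definition window_load (m n : nat) (rho : 'I_n -> nat) (L : nat)
    (f : {ffun 'I_m -> 'I_n}) : nat :=
  #|[pred i | (rho (f i) < L)%N]|.

Definition occurs_upto (T : Type) (H : nat -> pred T) (L : nat) (f : T) : bool :=
  has (fun l => H l f) (iota 1 L).

Lemma occurs_uptoS (T : Type) (H : nat -> pred T) L f :
  occurs_upto H L.+1 f = occurs_upto H L f || H L.+1 f.
Proof.
by rewrite /occurs_upto -[L.+1]addn1 iotaD has_cat /= orbF addnC.
Qed.

Section NestedWindows.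
Variables (R : realType) (m n : nat) (rho : 'I_n -> nat) (N : nat).
Local Notation outcome := {ffun 'I_m -> 'I_n}.

(* The ranking rho makes the windows {y | rho y < L}, L <= N, a chain of
   sets growing by one bin at a time. *)
Hypothesis window_card : forall L, (L <= N)%N -> #|[pred y | (rho y < L)%N]| = L.

Lemma window_mass L : (L <= N)%N -> \sum_y ((rho y < L)%N)%:R = L%:R :> R.
Proof.
by move=> hL; rewrite -natr_sum -[in RHS](window_card hL) card_sum_indicator.
Qed.

Variables (y0 : 'I_n) (C : R).
Hypothesis rho_y0 : rho y0 = 0%N.
Hypothesis C_ge0 : 0 <= C.

Definition tilt (L : nat) (y : 'I_n) : R :=
  if (rho y < L)%N then 1 + C / L%:R else 1.

Definition tilted_weight (L : nat) (f : outcome) : R :=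
  \prod_(i : 'I_m) tilt L (f i).

(* Collapsing the window W_L to the single bin y0 forgets where inside W_L
   the balls fell; events invariant under it only see the outside of W_L. *)
Definition collapse (L : nat) (y : 'I_n) : 'I_n :=
  if (rho y < L)%N then y0 else y.

Definition sees_outside (L : nat) (B : pred outcome) : Prop :=
  forall f, B f = B [ffun i => collapse L (f i)].

Lemma tilted_weight_ge0 L f : 0 <= tilted_weight L f.
Proof.
apply: prodr_ge0 => i _; rewrite /tilt; case: ifP => // _.
by rewrite addr_ge0 // divr_ge0.
Qed.

Lemma tilted_weightE L f :
  tilted_weight L f = (1 + C / L%:R) ^+ window_load rho L f.
Proof. by rewrite /tilted_weight /tilt -big_mkcond /= prodr_const. Qed.

(* Seeing only the outside of W_{L+1} implies seeing only the outside of
   the smaller window W_L (y0 lies in W_L). *)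
Lemma sees_outside_mono L B : sees_outside L.+1 B -> sees_outside L B.
Proof.
move=> HB f; rewrite HB [in RHS]HB; congr B; apply/ffunP => i.
rewrite !ffunE /collapse; case: (boolP (rho (f i) < L)%N) => h //.
by rewrite rho_y0 /= ltnS (ltnW h).
Qed.

(* The tilts of W_L and W_{L+1} give the same mass to every fiber of the
   collapse of W_{L+1}: they agree outside W_{L+1}, and both give mass
   L + 1 + C to W_{L+1} itself. *)
Lemma tilt_fiber_mass L z : (1 <= L)%N -> (L.+1 <= N)%N ->
  \sum_y (collapse L.+1 y == z)%:R * tilt L y =
  \sum_y (collapse L.+1 y == z)%:R * tilt L.+1 y.
Proof.
move=> hL hN; apply/eqP; rewrite -subr_eq0 -sumrB.
have pointwise y : (collapse L.+1 y == z)%:R * tilt L y -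
    (collapse L.+1 y == z)%:R * tilt L.+1 y =
  (y0 == z)%:R * (((rho y < L)%N)%:R * (C / L%:R) -
                  ((rho y < L.+1)%N)%:R * (C / L.+1%:R)).
  rewrite /collapse /tilt; case: (ltnP (rho y) L) => h.
    by rewrite ltnS (ltnW h) /=; ring.
  by case: (ltnP (rho y) L.+1) => h' /=; ring.
rewrite (eq_bigr _ (fun y _ => pointwise y)) -mulr_sumr sumrB -!mulr_suml.
rewrite !window_mass ?(ltnW hN) //.
by rewrite !mulrA !(mulrC _%:R C) -!mulrA !divff ?mulr1 ?subrr ?mulr0 //;
  rewrite pnatr_eq0 -lt0n.
Qed.

Lemma tilted_weight_step L (B : pred outcome) :
  (1 <= L)%N -> (L.+1 <= N)%N -> sees_outside L.+1 B ->
  \sum_f (B f)%:R * tilted_weight L f = \sum_f (B f)%:R * tilted_weight L.+1 f.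
Proof.
move=> hL hN HB; apply: (sum_prod_weights_fiberwise (pi := collapse L.+1)).
  by move=> z; apply: tilt_fiber_mass.
by move=> f; rewrite -HB.
Qed.

(* The total tilted weight of the largest window: every ball contributes
   a factor n + C (the window W_N carries mass N (1 + C/N)). *)
Lemma tilted_weight_total : (1 <= N)%N ->
  \sum_(f : outcome) tilted_weight N f = (n%:R + C) ^+ m.
Proof.
move=> hN.
rewrite /tilted_weight -(bigA_distr_bigA (fun _ y => tilt N y)) /=.
rewrite prodr_const card_ord; congr (_ ^+ _).
have -> : \sum_y tilt N y = \sum_(y : 'I_n) (1 + ((rho y < N)%N)%:R * (C / N%:R)).
  by apply: eq_bigr => y _; rewrite /tilt; case: ifP; rewrite ?mul1r ?mul0r ?addr0.
rewrite big_split /= sumr_const card_ord -mulr_suml window_mass //.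
by rewrite mulrCA divff ?mulr1 // pnatr_eq0 -lt0n.
Qed.

Section Maximal.
Variables (H : nat -> pred outcome) (t : R).
Hypothesis H_outside : forall L, (1 <= L <= N)%N -> sees_outside L (H L).
Hypothesis H_weight : forall L f, (1 <= L <= N)%N -> H L f -> t <= tilted_weight L f.

(* Optional stopping: stop at the first L with H_L; the stopped weight is
   at least t, and by the martingale identity its total does not exceed
   the total weight of the window reached. *)
Lemma maximal_inequality L (B : pred outcome) : (1 <= L <= N)%N -> sees_outside L B ->
  t * \sum_f ((B f) && occurs_upto H L f)%:R <= \sum_f (B f)%:R * tilted_weight L f.
Proof.
elim: L B => [//|L IH] B /andP[_ hLN] HB.
have stop_bound f : t * ((B f) && H L.+1 f)%:R <=
    ((B f) && H L.+1 f)%:R * tilted_weight L.+1 f.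
  case E: (B f && H L.+1 f); last by rewrite mulr0 mul0r.
  rewrite mulr1 mul1r; apply: H_weight; first by rewrite hLN.
  by case/andP: E.
case: (posnP L) => [L0 | Lpos].
  subst L; rewrite mulr_sumr; apply: ler_sum => f _.
  have -> : (B f && occurs_upto H 1 f) = (B f && H 1 f) by rewrite /occurs_upto /= orbF.
  apply: le_trans (stop_bound f) _; apply: ler_wpM2r; first exact: tilted_weight_ge0.
  by rewrite ler_nat; case: (B f); case: (H 1 f).
pose B' f := B f && ~~ H L.+1 f.
have HB' : sees_outside L.+1 B' by move=> f; rewrite /B' -HB -H_outside // hLN.
have IH' := IH B' (ltac:(by rewrite Lpos ltnW)) (sees_outside_mono HB').
have split_hit f : ((B f) && occurs_upto H L.+1 f)%:R =
    ((B f) && H L.+1 f)%:R + ((B' f) && occurs_upto H L f)%:R :> R.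
  rewrite occurs_uptoS /B'.
  by case: (B f); case: (H L.+1 f); case: (occurs_upto H L f) => /=; ring.
have split_weight f : (B f)%:R * tilted_weight L.+1 f =
    ((B f) && H L.+1 f)%:R * tilted_weight L.+1 f + (B' f)%:R * tilted_weight L.+1 f.
  by rewrite /B'; case: (B f); case: (H L.+1 f) => /=; ring.
rewrite (eq_bigr _ (fun f _ => split_hit f)) big_split mulrDr.
rewrite (eq_bigr _ (fun f _ => split_weight f)) big_split.
apply: lerD; first by rewrite mulr_sumr; apply: ler_sum => f _; apply: stop_bound.
by rewrite -(tilted_weight_step Lpos hLN HB').
Qed.

Lemma maximal_inequality_total : (1 <= N)%N ->
  t * #|[set f | occurs_upto H N f]|%:R <= (n%:R + C) ^+ m.
Proof.
move=> hN; rewrite -tilted_weight_total // -sum_indicator.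
have -> : \sum_(f : outcome) tilted_weight N f =
    \sum_f (predT f)%:R * tilted_weight N f by apply: eq_bigr => f _; rewrite mul1r.
by apply: (maximal_inequality (B := predT)); rewrite ?hN ?leqnn.
Qed.

End Maximal.
End NestedWindows.

Lemma expR_div_le1D (R : realType) (y : R) : 0 <= y -> expR (y / (1 + y)) <= 1 + y.
Proof.
move=> hy; have h1y : 0 < 1 + y by lra.
have := expR_ge1Dx (- (y / (1 + y))).
have -> : 1 + - (y / (1 + y)) = (1 + y)^-1 by field; lra.
by rewrite expRN lef_pV2 ?posrE ?expR_gt0.
Qed.

(* (a + C)^m <= a^m exp(m C / a), from 1 + z <= exp z. *)
Lemma exprD_le_expR (R : realType) (a C : R) (m : nat) : 0 < a -> 0 <= C ->
  (a + C) ^+ m <= a ^+ m * expR (m%:R * (C / a)).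
Proof.
move=> ha hC; rewrite expRM_natl -exprMn.
apply: lerXn2r; rewrite ?nnegrE.
- by rewrite addr_ge0 // ltW.
- by rewrite mulr_ge0 ?expR_ge0 // ltW.
have : a * (1 + C / a) <= a * expR (C / a) by rewrite ler_pM2l // expR_ge1Dx.
by rewrite mulrDr mulr1 mulrCA divff ?mulr1 // gt_eqF.
Qed.

Section Overflow.
Variables (R : realType) (m n : nat) (rho : 'I_n -> nat) (mu e A : R).
Hypotheses (mu_gt0 : 0 < mu) (e_le1 : e <= 1) (A_ge0 : 0 <= A).
Local Notation outcome := {ffun 'I_m -> 'I_n}.

(* The window W_L overflows: it receives more than (1 + e) L mu + A balls,
   L mu being its expected load when m = mu n. *)
Definition overflow (L : nat) (f : outcome) : bool :=
  (1 + e) * L%:R * mu + A < (window_load rho L f)%:R.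

Lemma overflow_sees_outside y0 L : rho y0 = 0%N -> (1 <= L)%N ->
  sees_outside rho y0 L (overflow L).
Proof.
move=> hy0 hL f; rewrite /overflow /window_load; congr (_ < _%:R).
apply: eq_card => i; rewrite !inE ffunE /collapse.
by case: ifP => // _; rewrite hy0 hL.
Qed.

Lemma overflow_tilted_weight L f : (1 <= L)%N -> overflow L f ->
  expR ((1 + e) * A / 2) <= tilted_weight rho (A / (2 * mu)) L f.
Proof.
rewrite /overflow tilted_weightE => hL hc.
set c := window_load rho L f in hc *; set C := A / (2 * mu).
set y := C / L%:R.
have hL' : 0 < L%:R :> R by rewrite ltr0n.
have hC : 0 <= C by apply: divr_ge0 => //; rewrite mulr_ge0 // ltW.
have hy : 0 <= y by apply: divr_ge0 => //; apply: ltW.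
have hLy : L%:R * y = C by rewrite /y mulrCA divff ?mulr1 // gt_eqF.
have hmuC : mu * C = A / 2 by rewrite /C; field; rewrite gt_eqF.
apply: (@le_trans _ _ (expR (y / (1 + y)) ^+ c)); last first.
  by apply: lerXn2r; rewrite ?nnegrE ?expR_ge0 ?expR_div_le1D //; lra.
rewrite -expRM_natl ler_expR mulrA ler_pdivlMr; last by lra.
have key : (1 + e) * A / 2 * (1 + y) <= ((1 + e) * L%:R * mu + A) * y.
  have -> : ((1 + e) * L%:R * mu + A) * y = (1 + e) * (mu * (L%:R * y)) + A * y by ring.
  rewrite hLy hmuC; clearbody y.
  have : 0 <= (1 - e) * (A * y) by rewrite mulr_ge0 ?subr_ge0 // mulr_ge0.
  lra.
by apply: (le_trans key); rewrite ler_wpM2r // ltW.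
Qed.

Lemma window_overflow_bound N : m%:R = mu * n%:R ->
  (forall L, (L <= N)%N -> #|[pred y | (rho y < L)%N]| = L) ->
  #|[set f | occurs_upto overflow N f]|%:R <= n%:R ^+ m * expR (- (e * A / 2)).
Proof.
move=> hm window_card.
have [N0 | hN] := posnP N.
  have -> : [set f | occurs_upto overflow N f] = set0.
    by apply/setP => f; rewrite !inE N0.
  by rewrite cards0 mulr_ge0 ?expR_ge0 ?exprn_ge0.
have [y0 hy0] : exists y0, rho y0 = 0%N.
  case: (pickP [pred y | (rho y < 1)%N]) => [y | none].
    by rewrite inE ltnS leqn0 => /eqP; exists y.
  by have := window_card 1%N hN; rewrite (eq_card0 none).
have hn : 0 < n%:R :> R by rewrite ltr0n (leq_ltn_trans _ (ltn_ord y0)).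
have hC : 0 <= A / (2 * mu) by rewrite divr_ge0 // mulr_ge0 // ltW.
have hmax := maximal_inequality_total window_card hy0 hC
  (fun L hL => overflow_sees_outside hy0 (proj1 (andP hL)))
  (fun L f hL => overflow_tilted_weight (proj1 (andP hL))) hN.
have hmean : m%:R * (A / (2 * mu) / n%:R) = A / 2 by rewrite hm; field; rewrite !gt_eqF.
have := le_trans hmax (exprD_le_expR m hn hC); rewrite hmean.
rewrite mulrC -ler_pdivlMr ?expR_gt0 // => /le_trans; apply.
rewrite -(mulrA (n%:R ^+ m)) -expRB ler_wpM2l ?exprn_ge0 // ler_expR; lra.
Qed.

End Overflow.

Lemma window_load_le_of_no_overflow (R : realType) m n (rho : 'I_n -> nat)
    (mu e A : R) N L (f : {ffun 'I_m -> 'I_n}) :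
  0 <= A -> ~~ occurs_upto (overflow rho mu e A) N f -> (L <= N)%N ->
  (window_load rho L f)%:R <= (1 + e) * L%:R * mu + A.
Proof.
move=> hA /hasPn no_overflow hLN; case: (posnP L) => [-> | hL].
  rewrite mulr0 mul0r add0r (_ : window_load _ _ _ = 0%N) //.
  by apply: eq_card0 => i; rewrite inE.
by rewrite leNgt; apply: no_overflow; rewrite mem_iota hL add1n ltnS.
Qed.

Lemma card_bin_range n lo hi : (hi <= n)%N ->
  #|[pred y : 'I_n | (lo <= y)%N && (y < hi)%N]| = (hi - lo)%N.
Proof.
move=> hhi; rewrite -sum1_card big_mkcond /=.
rewrite -(big_mkord xpredT (fun i => if (lo <= i < hi)%N then 1%N else 0%N)) /=.
rewrite (big_cat_nat (n := hi)) //= [X in (_ + X)%N]big1_seq ?addn0; last first.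
  by move=> i /andP[_]; rewrite mem_index_iota => /andP[h _]; rewrite ltnNge h andbF.
have [hlo | hlo] := leqP lo hi; last first.
  rewrite big1_seq; last first.
    move=> i /andP[_]; rewrite mem_index_iota => /andP[_ h].
    by rewrite leqNgt (ltn_trans h hlo).
  by apply/esym/eqP; rewrite subn_eq0 ltnW.
rewrite (big_cat_nat (n := lo)) //= big1_seq ?add0n; last first.
  by move=> i /andP[_]; rewrite mem_index_iota => /andP[_ h]; rewrite leqNgt h.
rewrite (eq_big_seq (fun _ => 1%N)) ?sum_nat_const_nat ?muln1 //.
by move=> i; rewrite mem_index_iota => ->.
Qed.

Section AroundBin.
Variables (n : nat) (j : 'I_n).

(* Bins are ranked by their distance to j: the left ranking sees the bins
   j, j-1, ..., 0 and the right ranking the bins j+1, ..., n-1 (the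
   other bins get the unreachable rank n). *)
Definition left_rank (y : 'I_n) : nat := if (y <= j)%N then (j - y)%N else n.
Definition right_rank (y : 'I_n) : nat := if (j < y)%N then (y - j.+1)%N else n.

Lemma left_window_card L : (L <= j.+1)%N -> #|[pred y | (left_rank y < L)%N]| = L.
Proof.
move=> hL; rewrite -[RHS](_ : (j.+1 - (j.+1 - L) = L)%N); last by lia.
rewrite -(card_bin_range (j.+1 - L) (ltn_ord j)); apply: eq_card => y.
rewrite !inE /left_rank; have := ltn_ord y; have := ltn_ord j.
by case: (leqP y j) => h /= h1 h2; apply/idP/idP => ?; lia.
Qed.

Lemma right_window_card L : (L <= n - j.+1)%N ->
  #|[pred y | (right_rank y < L)%N]| = L.
Proof.
move=> hL; rewrite -[RHS](_ : (j.+1 + L - j.+1 = L)%N); last by lia.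
rewrite -(@card_bin_range n j.+1 (j.+1 + L)); last by have := ltn_ord j; lia.
apply: eq_card => y; rewrite !inE /right_rank; have := ltn_ord y.
case: (ltnP j y) => h /= h1; first by apply/idP/idP => ?; lia.
by apply/negbTE; rewrite -leqNgt; lia.
Qed.

Lemma in_interval_split (a b : nat) (y : 'I_n) : (a <= j <= b)%N -> (b < n)%N ->
  ((a <= y <= b)%N : nat) =
  ((left_rank y < j.+1 - a)%N + (right_rank y < b - j)%N)%N.
Proof.
move=> /andP[haj hjb] hbn; rewrite /left_rank /right_rank.
have := ltn_ord y; have := ltn_ord j.
case: (leqP y j) => hy hjn hyn /=.
  rewrite [(n < _)%N]ltnNge (_ : (b - j <= n)%N) ?addn0; last by lia.
  by congr nat_of_bool; apply/idP/idP => ?; lia.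
rewrite [(n < _)%N]ltnNge (_ : (j.+1 - a <= n)%N) ?add0n; last by lia.
by congr nat_of_bool; apply/idP/idP => ?; lia.
Qed.

Lemma load_split m (f : {ffun 'I_m -> 'I_n}) (a b : 'I_n) : (a <= j <= b)%N ->
  load f a b = (window_load left_rank (j.+1 - a) f + window_load right_rank (b - j) f)%N.
Proof.
move=> hajb; rewrite /load /window_load cardsE !card_sum_indicator -big_split /=.
by apply: eq_bigr => i _; rewrite in_interval_split ?ltn_ord.
Qed.

End AroundBin.

Lemma intervals_ok_of_no_overflow (R : realType) m n (mu x k : R) (j : 'I_n)
    (f : {ffun 'I_m -> 'I_n}) : 0 < x -> 0 <= k ->
  ~~ occurs_upto (overflow (left_rank j) mu x^-1 (x * k / 2)) j.+1 f ->
  ~~ occurs_upto (overflow (right_rank j) mu x^-1 (x * k / 2)) (n - j.+1) f ->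
  all_intervals_ok mu x k j f.
Proof.
move=> hx hk no_left no_right; have hA : 0 <= x * k / 2 by rewrite divr_ge0 // mulr_ge0 // ltW.
apply/forallP => a; apply/forallP => b; apply/implyP => hajb.
have /andP[haj hjb] := hajb; have hbn := ltn_ord b.
have hleft := window_load_le_of_no_overflow (L := j.+1 - a) hA no_left.
have hright := window_load_le_of_no_overflow (L := b - j) hA no_right.
rewrite (load_split f hajb) natrD; apply: le_trans (lerD (hleft _) (hright _)) _; [lia | lia |].
have -> : (b - a + 1)%:R = (j.+1 - a)%:R + (b - j)%:R :> R.
  by rewrite -natrD; congr _%:R; lia.
lra.
Qed.

Lemma balls_prob_union_bound (R : realType) m n (E B1 B2 : pred {ffun 'I_m -> 'I_n})
    (d : R) : (0 < n)%N -> (forall f, ~~ B1 f -> ~~ B2 f -> E f) ->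
  #|[set f | B1 f]|%:R <= n%:R ^+ m * d -> #|[set f | B2 f]|%:R <= n%:R ^+ m * d ->
  1 - 2 * d <= balls_prob R E.
Proof.
move=> hn cover h1 h2.
have hcover : (n ^ m <= #|[set f | E f]| + #|[set f | B1 f]| + #|[set f | B2 f]|)%N.
  have : [set: {ffun 'I_m -> 'I_n}] \subset [set f | E f] :|: [set f | B1 f] :|: [set f | B2 f].
    apply/subsetP => f _; rewrite !inE.
    by case: (B1 f) (B2 f) (cover f) => [] [] /=; rewrite ?orbT // => ->.
  move/subset_leq_card; rewrite cardsT card_ffun !card_ord => /leq_trans; apply.
  by rewrite !cardsU !(leq_trans (leq_subr _ _)) ?leq_add2r ?cardsU ?leq_subr.
have hT : 0 < n%:R ^+ m :> R by rewrite exprn_gt0 // ltr0n.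
rewrite /balls_prob card_ffun !card_ord natrX ler_pdivlMr // mulrC.
have : n%:R ^+ m <= #|[set f | E f]|%:R + #|[set f | B1 f]|%:R + #|[set f | B2 f]|%:R :> R.
  by rewrite -natrX -!natrD ler_nat.
lra.
Qed.

Lemma two_expR_le_pow2 (R : realType) (k : R) : 8 <= k ->
  2 * expR (- (k / 4)) <= 2 `^ (- ((8 * ln 2)^-1 * k)).
Proof.
move=> hk; have hln2 : 0 < ln (2 : R) by apply: ln_gt0; lra.
rewrite /powR (negbTE (_ : (2 : R) != 0)) ?pnatr_eq0 //.
have -> : - ((8 * ln 2)^-1 * k) * ln 2 = - (k / 8) by field; rewrite gt_eqF.
have -> : expR (- (k / 4)) = expR (- (k / 8)) * expR (- (k / 8)) :> R.
  by rewrite -expRD; congr expR; lra.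
rewrite mulrA ler_piMl ?expR_ge0 // expRN -[X in X * _]mulr1 ler_pdivrMr ?expR_gt0 //.
by rewrite mulrC mul1r; have := expR_ge1Dx (k / 8); lra.
Qed.

Unset Implicit Arguments.
Theorem mainTheorem3 (R : realType) (mu : R) (hmu : 0 < mu) :
  exists (c k0 : R), 0 < c /\
    forall (n m : nat) (x k : R) (j : 'I_n),
      m%:R = mu * n%:R -> 1 < x -> 1 <= k -> k0 <= k ->
      1 - (2 : R) `^ (- (c * k)) <= @balls_prob R m n (@all_intervals_ok R m n mu x k j).
Proof.
have hln2 : 0 < ln (2 : R) by apply: ln_gt0; lra.
exists (8 * ln 2)^-1, 8; split; first by rewrite invr_gt0 mulr_gt0.
move=> n m x k j hm hx hk1 hk8.
have hx0 : 0 < x by lra.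
have he1 : x^-1 <= 1 by rewrite invf_le1 // ltW.
have hA : 0 <= x * k / 2 by apply: divr_ge0 => //; apply: mulr_ge0; lra.
have rate : - (x^-1 * (x * k / 2) / 2) = - (k / 4) by field; rewrite gt_eqF.
have hleft := window_overflow_bound hmu he1 hA hm (@left_window_card _ j).
have hright := window_overflow_bound hmu he1 hA hm (@right_window_card _ j).
rewrite rate in hleft hright.
apply: le_trans (balls_prob_union_bound _ _ hleft hright).
- by rewrite lerD2l lerN2 two_expR_le_pow2.
- exact: leq_ltn_trans (leq0n j) (ltn_ord j).
- by move=> f; apply: intervals_ok_of_no_overflow; lra.
Qed.
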